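(* Assume the setting described in the context and suppose the event $\mathcal{E}$ holds. Let $p\in\{1,\dots,k-1\}$, let $S^{(p)}\subseteq[n]$ with $|S^{(p)}|=p$, let $\hat{\mathbf{e}}^{(p)}$ be a unit eigenvector for the largest eigenvalue of $\hat{\boldsymbol{\Gamma}}_{S^{(p)},S^{(p)}}$ zero-padded to $\mathbb{R}^n$, assume $\langle\mathbf{v},\hat{\mathbf{e}}^{(p)}\rangle\neq0$, and let $S^{(p+1)}$ be the index set of the $p+1$ largest entries of $|\hat{\boldsymbol{\Gamma}}\hat{\mathbf{e}}^{(p)}|$. Then $$ \|\mathbf{v}_{S^{(p+1)}}\|_2\ \ge\ \sqrt{\frac{1}{s(p+1)}}-\frac{2}{\theta|\langle\mathbf{v},\hat{\mathbf{e}}^{(p)}\rangle|}\cdot C_0(1+\theta)\sqrt{\frac{2(p+1)\log n}{m}}, $$ where $C_0$ is the constant in the definition of $\mathcal{E}$.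
   Context: Let $n\ge 2$, $m\ge1$, $\theta>0$, $k\in[n]$; $\mathbf{v}\in\mathbb{R}^n$ a unit vector with at most $k$ nonzero entries; $\mathbf{x}_1,\dots,\mathbf{x}_m$ i.i.d. $\mathcal{N}(\mathbf{0},\mathbf{I}_n+\theta\mathbf{v}\mathbf{v}^\top)$; $\hat{\boldsymbol{\Gamma}}=\frac1m\sum_i\mathbf{x}_i\mathbf{x}_i^\top-\mathbf{I}_n$; $\mathbf{W}=\hat{\boldsymbol{\Gamma}}-\theta\mathbf{v}\mathbf{v}^\top$. $\mathbf{v}_S$ is the restriction of $\mathbf{v}$ to $S$, $\mathbf{A}_{S,S}$ a principal submatrix, $\|\cdot\|_2$ Euclidean/spectral norm. $v_{(1)}\ge v_{(2)}\ge\cdots$ are the sorted absolute entries of $\mathbf{v}$ and $s(p)=(\sum_{i=1}^pv_{(i)}^2)^{-1}$ for $1\le p\le k$. Fix an absolute constant $C_0>0$; $\mathcal{E}$ is the event that $\|\mathbf{W}_{S,S}\|_2\le C_0(1+\theta)\sqrt{|S|\log n/m}$ for all nonempty $S\subseteq[n]$. *)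

From HB Require Import structures.
From mathcomp Require Import all_boot all_order all_algebra.
From mathcomp Require Import all_classical all_reals all_analysis.
Set Implicit Arguments. Unset Strict Implicit. Unset Printing Implicit Defensive.
Import Order.TTheory GRing.Theory Num.Theory.
Local Open Scope ring_scope.

Section Defs.
Variable R : realType.

Definition vnorm (k : nat) (u : 'cV[R]_k) : R :=
  Num.sqrt (\sum_(i < k) u i 0 ^+ 2).

Definition opnorm (k : nat) (A : 'M[R]_k) : R :=
  sup [set vnorm (A *m u) | u in [set u : 'cV[R]_k | vnorm u = 1]]%classic.

Definition subm (n : nat) (S : {set 'I_n}) (A : 'M[R]_n) : 'M[R]_#|S| :=
  \matrix_(i, j) A (enum_val i) (enum_val j).

Definition subv (n : nat) (S : {set 'I_n}) (u : 'cV[R]_n) : 'cV[R]_#|S| :=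
  \col_i u (enum_val i) 0.

Definition sorted_abs (n : nat) (v : 'cV[R]_n) : seq R :=
  sort (fun a b : R => b <= a) [seq `|v i 0| | i <- enum 'I_n].

Definition s_fun (n : nat) (v : 'cV[R]_n) (p : nat) : R :=
  (\sum_(i < p) (nth 0 (sorted_abs v) i) ^+ 2)^-1.

Definition Gamma_hat (n m : nat) (x : 'I_m -> 'cV[R]_n) : 'M[R]_n :=
  (m%:R)^-1 *: (\sum_(i < m) (x i *m (x i)^T)) - 1%:M.

Definition W_mat (n m : nat) (x : 'I_m -> 'cV[R]_n) (theta : R) (v : 'cV[R]_n)
  : 'M[R]_n := Gamma_hat x - theta *: (v *m v^T).

Definition event_E (n m : nat) (x : 'I_m -> 'cV[R]_n) (theta : R)
  (v : 'cV[R]_n) (C0 : R) : Prop :=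
  forall S : {set 'I_n}, S != finset.set0 ->
    opnorm (subm S (W_mat x theta v)) <=
      C0 * (1 + theta) * Num.sqrt (#|S|%:R * ln (n%:R) / m%:R).

Definition inner (n : nat) (u w : 'cV[R]_n) : R := \sum_(i < n) u i 0 * w i 0.

Definition vsupp (n : nat) (u : 'cV[R]_n) : {set 'I_n} :=
  finset.finset (fun i : 'I_n => u i 0 != 0).

End Defs.

(* Write Gamma-hat e = c v + W e with c = theta <v, e>.  Since e is a unit vector
   supported on S, the event E bounds the noise W e on any set U of size p+1 by
   eps = C0 (1 + theta) sqrt (2 (p+1) log n / m), through the operator norm of
   W restricted to U :|: S, a set of size at most 2 (p+1).  Let T* be the p+1 largest entries of |v|, so that
   |v_T*| = s(p+1)^(-1/2).  As S^(p+1) collects the largest entries of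
   Gamma-hat e, the triangle inequality gives
     |c| |v_T*| <= |(Gamma-hat e)_T*| + eps <= |(Gamma-hat e)_S^(p+1)| + eps
               <= |c| |v_S^(p+1)| + 2 eps,
   and dividing by |c| is the claim. *)

From HB Require Import structures.
From mathcomp Require Import all_boot all_order all_algebra.
From mathcomp Require Import all_classical all_reals all_analysis.
From mathcomp Require Import ring lra zify.
Set Implicit Arguments. Unset Strict Implicit. Unset Printing Implicit Defensive.
Import Order.TTheory GRing.Theory Num.Theory.
Local Open Scope ring_scope.

Section L2normOn.
Variables (R : realType) (I : finType).
Implicit Types (U V : {set I}) (f h : I -> R).

Lemma cauchy_schwarz_sum (J : Type) (r : seq J) (P : pred J) (a b : J -> R) :
  (\sum_(i <- r | P i) a i * b i) ^+ 2 <=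
  (\sum_(i <- r | P i) a i ^+ 2) * (\sum_(i <- r | P i) b i ^+ 2).
Proof.
set A := \sum_(i <- r | P i) a i ^+ 2; set B := \sum_(i <- r | P i) b i ^+ 2.
set C := \sum_(i <- r | P i) a i * b i.
(* Lagrange's identity: the double sum below equals 2 (A B - C^2). *)
have row i : \sum_(j <- r | P j) (a i * b j - a j * b i) ^+ 2 =
    B * a i ^+ 2 + A * b i ^+ 2 - C * (2 * (a i * b i)).
  rewrite /A /B /C !mulr_suml -big_split -sumrB /=.
  by apply: eq_bigr => j _; ring.
have : 0 <= \sum_(i <- r | P i) \sum_(j <- r | P j) (a i * b j - a j * b i) ^+ 2.
  by do 2!apply: sumr_ge0 => ? _; apply: sqr_ge0.
rewrite (eq_bigr _ (fun i _ => row i)) sumrB big_split /= -!mulr_sumr.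
by rewrite -/A -/B -/C; nra.
Qed.

Definition l2norm_on U f := Num.sqrt (\sum_(i in U) f i ^+ 2).

Lemma eq_l2norm_on U f h : f =1 h -> l2norm_on U f = l2norm_on U h.
Proof. by move=> fh; congr Num.sqrt; apply: eq_bigr => i _; rewrite fh. Qed.

Lemma l2norm_onD U f h :
  l2norm_on U (fun i => f i + h i) <= l2norm_on U f + l2norm_on U h.
Proof.
rewrite /l2norm_on; set A := \sum_(i in U) f i ^+ 2.
set B := \sum_(i in U) h i ^+ 2; set C := \sum_(i in U) f i * h i.
have A0 : 0 <= A by apply: sumr_ge0 => i _; apply: sqr_ge0.
have B0 : 0 <= B by apply: sumr_ge0 => i _; apply: sqr_ge0.
have -> : \sum_(i in U) (f i + h i) ^+ 2 = A + B + 2 * C.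
  by rewrite /A /B /C mulr_sumr -!big_split /=; apply: eq_bigr => i _; ring.
have C_le : C <= Num.sqrt A * Num.sqrt B.
  rewrite -sqrtrM //; apply: le_trans (ler_norm C) _; rewrite -sqrtr_sqr.
  exact/ler_wsqrtr/cauchy_schwarz_sum.
rewrite -(ger0_norm (addr_ge0 (sqrtr_ge0 A) (sqrtr_ge0 B))) -sqrtr_sqr.
by apply: ler_wsqrtr; rewrite sqrrD !sqr_sqrtr // -mulr_natr; lra.
Qed.

Lemma l2norm_onN U f : l2norm_on U (fun i => - f i) = l2norm_on U f.
Proof. by congr Num.sqrt; apply: eq_bigr => i _; rewrite sqrrN. Qed.

Lemma l2norm_onZ U f c : l2norm_on U (fun i => c * f i) = `|c| * l2norm_on U f.
Proof.
rewrite /l2norm_on -sqrtr_sqr -sqrtrM ?sqr_ge0 // mulr_sumr.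
by congr Num.sqrt; apply: eq_bigr => i _; rewrite exprMn.
Qed.

Lemma l2norm_on_subset U V f : U \subset V -> l2norm_on U f <= l2norm_on V f.
Proof.
move=> UV; apply: ler_wsqrtr.
rewrite [X in _ <= X](big_setID U) /= (finset.setIidPr UV) lerDl.
by apply: sumr_ge0 => i _; apply: sqr_ge0.
Qed.

Lemma ler_sum_top_set U V (F : I -> R) :
  #|U| = #|V| -> (forall i j, i \in U -> j \notin U -> F j <= F i) ->
  \sum_(i in V) F i <= \sum_(i in U) F i.
Proof.
move=> cUV top.
rewrite (big_setID U) [X in _ <= X](big_setID V) /= finset.setIC lerD2l.
have cD : #|V :\: U| = #|U :\: V| by rewrite !cardsD cUV finset.setIC.
(* double counting over the pairs (outside U, inside U) *)
have : (\sum_(i in V :\: U) F i) *+ #|U :\: V|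
       <= (\sum_(i in U :\: V) F i) *+ #|V :\: U|.
  rewrite -sumr_const -sumrMnl; apply: ler_sum => i; rewrite inE => /andP[iV iU].
  rewrite -sumr_const; apply: ler_sum => j; rewrite inE => /andP[jU jV].
  exact: top.
rewrite cD; case: (posnP #|U :\: V|) => [c0|cp]; last by rewrite ler_pMn2r.
have /eqP -> : U :\: V == finset.set0 by rewrite -cards_eq0 c0.
have /eqP -> : V :\: U == finset.set0 by rewrite -cards_eq0 cD c0.
by rewrite !big_set0.
Qed.

Lemma l2norm_on_top_set U V f :
  #|U| = #|V| -> (forall i j, i \in U -> j \notin U -> `|f j| <= `|f i|) ->
  l2norm_on V f <= l2norm_on U f.
Proof.
move=> cUV top; apply/ler_wsqrtr/ler_sum_top_set => // i j iU jU.
by rewrite -[f i ^+ 2]real_normK ?num_real // -[f j ^+ 2]real_normK ?num_real //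
   lerXn2r ?nnegrE ?top.
Qed.

Lemma l2norm_on_top_perturb U V f h c eps :
  l2norm_on V (fun i => c * f i + h i) <= l2norm_on U (fun i => c * f i + h i) ->
  l2norm_on U h <= eps -> l2norm_on V h <= eps ->
  `|c| * l2norm_on V f <= `|c| * l2norm_on U f + 2 * eps.
Proof.
move=> VU hU hV; rewrite -!l2norm_onZ.
have lowV : l2norm_on V (fun i => c * f i)
    <= l2norm_on V (fun i => c * f i + h i) + l2norm_on V h.
  rewrite -[X in _ <= _ + X]l2norm_onN [X in X <= _]
    (@eq_l2norm_on V _ (fun i => c * f i + h i + - h i)) => [|i]; last by ring.
  exact: l2norm_onD.
have upU := l2norm_onD U (fun i => c * f i) h.
lra.
Qed.

End L2normOn.

Section SubmatrixNorms.
Variable R : realType.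

Lemma vnorm_subv n (U : {set 'I_n}) (u : 'cV[R]_n) :
  vnorm (subv U u) = l2norm_on U (fun i => u i 0).
Proof.
rewrite /vnorm /l2norm_on (big_enum_val (fun i => u i 0 ^+ 2)) /=.
by congr Num.sqrt; apply: eq_bigr => i _; rewrite mxE.
Qed.

Lemma vnorm_subv_supported n (U : {set 'I_n}) (u : 'cV[R]_n) :
  (forall j, j \notin U -> u j 0 = 0) -> vnorm (subv U u) = vnorm u.
Proof.
move=> uU; rewrite vnorm_subv /l2norm_on /vnorm big_mkcond /=.
by congr Num.sqrt; apply: eq_bigr => i _; case: ifPn => // /uU->; rewrite expr0n.
Qed.

Lemma vnormZ k (u : 'cV[R]_k) c : vnorm (c *: u) = `|c| * vnorm u.
Proof.
rewrite /vnorm -sqrtr_sqr -sqrtrM ?sqr_ge0 // mulr_sumr.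
by congr Num.sqrt; apply: eq_bigr => i _; rewrite mxE exprMn.
Qed.

Lemma vnorm_mulmx_le_frobenius k (A : 'M[R]_k) (u : 'cV[R]_k) :
  vnorm (A *m u) <= Num.sqrt (\sum_(i < k) \sum_(j < k) A i j ^+ 2) * vnorm u.
Proof.
rewrite /vnorm -sqrtrM; last by do 2!apply: sumr_ge0 => ? _; apply: sqr_ge0.
apply/ler_wsqrtr; rewrite mulr_suml; apply: ler_sum => i _.
by rewrite mxE; apply: cauchy_schwarz_sum.
Qed.

Lemma vnorm_mulmx_le_opnorm k (A : 'M[R]_k) (u : 'cV[R]_k) :
  vnorm (A *m u) <= opnorm A * vnorm u.
Proof.
have frob := vnorm_mulmx_le_frobenius A.
have [u0|unz] := eqVneq (vnorm u) 0.
  by apply: le_trans (frob u) _; rewrite u0 !mulr0.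
have up : 0 < vnorm u by rewrite lt0r unz sqrtr_ge0.
(* [sup] bounds the set only once it is bounded above: the Frobenius bound. *)
have : vnorm (A *m ((vnorm u)^-1 *: u)) <= opnorm A.
  apply: ub_le_sup; last by exists ((vnorm u)^-1 *: u) => //=;
    rewrite vnormZ ger0_norm ?invr_ge0 ?(ltW up) // mulVf.
  by exists (Num.sqrt (\sum_(i < k) \sum_(j < k) A i j ^+ 2)) => _ [w /= w1 <-];
    have := frob w; rewrite w1 mulr1.
by rewrite -scalemxAr vnormZ ger0_norm ?invr_ge0 ?(ltW up) // ler_pdivrMl // mulrC.
Qed.

Lemma subm_mulmx_subv n (V : {set 'I_n}) (M : 'M[R]_n) (e : 'cV[R]_n) :
  (forall j, j \notin V -> e j 0 = 0) -> subm V M *m subv V e = subv V (M *m e).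
Proof.
move=> eV; apply/matrixP => i j; rewrite !mxE (ord1 j).
under eq_bigr => l _ do rewrite !mxE.
rewrite -(big_enum_val (fun l => M (enum_val i) l * e l 0)) /= big_mkcond /=.
by apply: eq_bigr => l _; case: ifPn => // /eV->; rewrite mulr0.
Qed.

Lemma l2norm_on_mulmx_le_opnorm n (V : {set 'I_n}) (M : 'M[R]_n) (e : 'cV[R]_n) :
  (forall j, j \notin V -> e j 0 = 0) ->
  l2norm_on V (fun i => (M *m e) i 0) <= opnorm (subm V M) * vnorm e.
Proof.
move=> eV; rewrite -vnorm_subv -subm_mulmx_subv // -(vnorm_subv_supported eV).
exact: vnorm_mulmx_le_opnorm.
Qed.

End SubmatrixNorms.

Lemma sorted_abs_top_set (R : realType) n (v : 'cV[R]_n) q : (q <= n)%N ->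
  exists2 T : {set 'I_n}, #|T| = q &
    Num.sqrt (s_fun v q)^-1 = l2norm_on T (fun i => v i 0).
Proof.
move=> qn; set a := fun i => `|v i 0|.
pose idx := sort (fun i j => a j <= a i) (enum 'I_n).
have idx_uniq : uniq (take q idx) by rewrite take_uniq // sort_uniq enum_uniq.
have size_idx : size (take q idx) = q by rewrite size_takel // size_sort size_enum_ord.
have take_abs : take q (sorted_abs v) = map a (take q idx).
  by rewrite /sorted_abs sort_map map_take.
have size_abs : size (take q (sorted_abs v)) = q by rewrite take_abs size_map.
exists [set i in take q idx].
  by rewrite cardsE; move/card_uniqP: idx_uniq ->.
rewrite /s_fun invrK /l2norm_on; congr Num.sqrt.
rewrite (eq_bigl (mem (take q idx))) => [|i]; last by rewrite inE.
rewrite -big_uniq //= (eq_bigr (fun i => a i ^+ 2)) => [|i _]; last first.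
  by rewrite real_normK ?num_real.
rewrite -(big_map a xpredT (fun y => y ^+ 2)) -take_abs (big_nth 0) size_abs.
by rewrite big_mkord; apply: eq_bigr => i _; rewrite nth_take.
Qed.

Section SpikedCovariance.
Variables (R : realType) (n m : nat) (x : 'I_m -> 'cV[R]_n) (theta : R).
Variable v : 'cV[R]_n.

Lemma Gamma_hat_mulmx e :
  Gamma_hat x *m e = (theta * inner v e) *: v + W_mat x theta v *m e.
Proof.
have vvTe : v *m v^T *m e = inner v e *: v.
  apply/matrixP => i j; rewrite !mxE (ord1 j) /inner mulr_suml.
  by apply: eq_bigr => l _; rewrite !mxE big_ord1 !mxE [RHS]mulrC mulrA.
by rewrite /W_mat [in RHS]mulmxBl -scalemxAl vvTe scalerA addrC subrK.
Qed.

Lemma event_E_noise_le C0 (S U : {set 'I_n}) (e : 'cV[R]_n) (N : nat) :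
  event_E x theta v C0 -> 0 <= C0 * (1 + theta) -> (1 <= n)%N ->
  (forall j, j \notin S -> e j 0 = 0) -> vnorm e = 1 ->
  U != finset.set0 -> (#|U| + #|S| <= N)%N ->
  l2norm_on U (fun i => (W_mat x theta v *m e) i 0)
    <= C0 * (1 + theta) * Num.sqrt (N%:R * ln n%:R / m%:R).
Proof.
move=> E C0theta n1 eS e1 U0 USN; set V := U :|: S.
have eV j : j \notin V -> e j 0 = 0 by rewrite inE negb_or => /andP[_ /eS].
have V0 : V != finset.set0.
  by apply: contraNneq U0 => V0; rewrite -finset.subset0 -V0 finset.subsetUl.
apply: le_trans (l2norm_on_subset _ (finset.subsetUl U S)) _.
apply: le_trans (l2norm_on_mulmx_le_opnorm _ eV) _; rewrite e1 mulr1.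
apply: le_trans (E V V0) _; apply/ler_wpM2l/ler_wsqrtr => //.
apply: ler_wpM2r; first by rewrite invr_ge0 ler0n.
apply: ler_wpM2r; first by rewrite ln_ge0 // ler1n.
by rewrite ler_nat (leq_trans _ USN) // cardsU leq_subr.
Qed.

End SpikedCovariance.

Theorem lemma4 (R : realType) (n m k p : nat) (theta C0 : R)
  (v : 'cV[R]_n) (x : 'I_m -> 'cV[R]_n)
  (S : {set 'I_n}) (e : 'cV[R]_n) (lam : R) (T : {set 'I_n}) :
  (2 <= n)%N -> (1 <= m)%N -> 0 < theta -> (1 <= k <= n)%N -> 0 < C0 ->
  vnorm v = 1 -> (#|vsupp v| <= k)%N ->
  event_E x theta v C0 ->
  (1 <= p)%N -> (p <= k - 1)%N ->
  #|S| = p ->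
  (* e-hat^(p): unit top eigenvector of Gamma-hat_{S,S}, zero-padded *)
  (forall i, i \notin S -> e i 0 = 0) ->
  vnorm e = 1 ->
  subm S (Gamma_hat x) *m subv S e = lam *: subv S e ->
  (forall mu, eigenvalue (subm S (Gamma_hat x)) mu -> mu <= lam) ->
  inner v e != 0 ->
  (* S^(p+1): indices of the p+1 largest entries of |Gamma-hat e-hat| *)
  #|T| = p.+1 ->
  (forall i j, i \in T -> j \notin T ->
     `|(Gamma_hat x *m e) j 0| <= `|(Gamma_hat x *m e) i 0|) ->
  vnorm (subv T v) >=
    Num.sqrt ((s_fun v p.+1)^-1)
    - 2 / (theta * `|inner v e|) * (C0 * (1 + theta)
        * Num.sqrt (2 * p.+1%:R * ln (n%:R) / m%:R)).
Proof.
(* Only the support and the norm of [e] matter, not its eigenvector property. *)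
move=> n2 _ theta0 /andP[_ kn] C0_gt0 _ _ E p1 pk cS eS e1 _ _ ve0 cT topT.
have [Ts cTs ->] : exists2 Ts : {set 'I_n}, #|Ts| = p.+1 &
    Num.sqrt (s_fun v p.+1)^-1 = l2norm_on Ts (fun i => v i 0).
  by apply: sorted_abs_top_set; lia.
set eps := C0 * (1 + theta) * _.
set w := fun i : 'I_n => (W_mat x theta v *m e) i 0.
have noise (U : {set 'I_n}) : #|U| = p.+1 -> l2norm_on U w <= eps.
  move=> cU; rewrite /eps -natrM; apply: event_E_noise_le eS e1 _ _ => //.
  - by rewrite mulr_ge0 ?addr_ge0 ?ltW.
  - by lia.
  - by rewrite -card_gt0 cU.
  - by rewrite cU cS; lia.
set c := theta * inner v e.
have obs i : (Gamma_hat x *m e) i 0 = c * v i 0 + w i.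
  by rewrite (Gamma_hat_mulmx x theta v) 2!mxE.
have top : l2norm_on Ts (fun i => c * v i 0 + w i)
    <= l2norm_on T (fun i => c * v i 0 + w i).
  apply: l2norm_on_top_set; first by rewrite cT cTs.
  by move=> i j; rewrite -!obs; apply: topT.
have := l2norm_on_top_perturb top (noise T cT) (noise Ts cTs).
rewrite vnorm_subv /c normrM (gtr0_norm theta0).
have P_gt0 : 0 < theta * `|inner v e| by rewrite mulr_gt0 ?normr_gt0.
set P := theta * _ in P_gt0 * => key.
rewrite lerBlDr -(ler_pM2l P_gt0) mulrDr.
by have -> : P * (2 / P * eps) = 2 * eps by field; rewrite gt_eqF.
Qed.
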